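(* Let $W\in[0,1]^{k\times k}$ be a symmetric positive semidefinite matrix with unit diagonal, $\mu>0$, and consider linear utilities $u_i({\boldsymbol\theta})=W_i^\top{\boldsymbol\theta}$ ($W_i$ the $i$-th column of $W$) with thresholds $\mu_i=\mu$ and strategy space $\mathbb{R}_+^k$. Let ${\boldsymbol\theta}^{\mathrm{eq}}$ be an optimal stable equilibrium, $I=\{i:\theta^{\mathrm{eq}}_i=0\}$, and $\bar W,\bar{\boldsymbol\theta}^{\mathrm{eq}}$ the restrictions of $W$ (rows and columns) and ${\boldsymbol\theta}^{\mathrm{eq}}$ to $[k]\setminus I$. Then $\bar{\boldsymbol\theta}^{\mathrm{eq}}$ is an optimal solution of $\min_{\bf x}\{\mathbf{1}^\top{\bf x}:\bar W{\bf x}\ge\mu\mathbf{1},\ {\bf x}\ge\mathbf{0}\}$.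
   Context: ${\boldsymbol\theta}$ is feasible if $u_i({\boldsymbol\theta})\ge\mu$ for all $i$. A feasible ${\boldsymbol\theta}\in\mathbb{R}_+^k$ is a stable equilibrium if for no $i$ is there $0\le\theta_i'<\theta_i$ with $u_i(\theta_i',{\boldsymbol\theta}_{-i})\ge\mu$ (${\boldsymbol\theta}$ with $i$-th entry replaced). An optimal stable equilibrium minimizes $\mathbf{1}^\top{\boldsymbol\theta}$ among stable equilibria. *)

From HB Require Import structures.
From mathcomp Require Import all_boot all_order all_algebra.
From mathcomp Require Import reals.
Set Implicit Arguments. Unset Strict Implicit. Unset Printing Implicit Defensive.
Import Order.TTheory GRing.Theory Num.Theory.
Local Open Scope ring_scope.

Section Game.
Variables (R : realType) (k : nat) (W : 'M[R]_k) (mu : R).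

Definition util (theta : 'cV[R]_k) (i : 'I_k) : R := \sum_(j < k) W j i * theta j 0.

Definition nonneg_vec (theta : 'cV[R]_k) : Prop := forall i, 0 <= theta i 0.

Definition feasible (theta : 'cV[R]_k) : Prop := forall i, mu <= util theta i.

Definition repl (theta : 'cV[R]_k) (i : 'I_k) (t : R) : 'cV[R]_k :=
  \col_j (if j == i then t else theta j 0).

Definition stable_eq (theta : 'cV[R]_k) : Prop :=
  nonneg_vec theta /\ feasible theta /\
  forall i (t : R), 0 <= t -> t < theta i 0 -> ~ (mu <= util (repl theta i t) i).

Definition total (theta : 'cV[R]_k) : R := \sum_(i < k) theta i 0.

Definition optimal_stable_eq (theta : 'cV[R]_k) : Prop :=
  stable_eq theta /\ forall theta', stable_eq theta' -> total theta <= total theta'.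

End Game.

Definition psd (R : realType) (k : nat) (W : 'M[R]_k) : Prop :=
  forall x : 'cV[R]_k, 0 <= (x^T *m W *m x) 0 0.

From HB Require Import structures.
From mathcomp Require Import all_boot all_order all_algebra.
From mathcomp Require Import reals.
From mathcomp Require Import lra.
Set Implicit Arguments. Unset Strict Implicit. Unset Printing Implicit Defensive.
Import Order.TTheory GRing.Theory Num.Theory.
Local Open Scope ring_scope.

(* On its support J a stable equilibrium is tight: with a unit diagonal,
   lowering theta_i lowers u_i one-for-one, so u_i(theta) > mu would allow
   lowering theta_i while keeping u_i >= mu, contradicting stability.
   Tightness and the symmetry of W then give, for every x feasible on J
   (sums over J),
     mu 1^T theta <= theta^T W x = x^T W theta = mu 1^T x,
   i.e. theta / mu is an optimal dual solution. *)

Section TightSystem.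
Variables (R : realFieldType) (I : finType) (J : {set I}) (W : I -> I -> R).
Hypothesis W_sym : forall i l, W i l = W l i.

Lemma sum_le_of_tight (mu : R) (y x : I -> R) :
  0 < mu ->
  (forall j, j \in J -> 0 <= y j) ->
  (forall j, j \in J -> \sum_(l in J) W j l * y l = mu) ->
  (forall j, j \in J -> mu <= \sum_(l in J) W j l * x l) ->
  \sum_(j in J) y j <= \sum_(j in J) x j.
Proof.
move=> mu_gt0 y_ge0 y_tight x_feas.
rewrite -(ler_pM2r mu_gt0) !big_distrl /=.
have -> : \sum_(j in J) x j * mu = \sum_(j in J) \sum_(l in J) x j * (W j l * y l).
  by apply: eq_bigr => j jJ; rewrite -(y_tight j jJ) big_distrr.
rewrite exchange_big /=; apply: ler_sum => l lJ.
rewrite (le_trans (ler_wpM2l (y_ge0 l lJ) (x_feas l lJ))) // big_distrr /=.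
by apply: ler_sum => j _; rewrite [W j l]W_sym !(mulrCA _ (W l j)) (mulrC (x j)).
Qed.
End TightSystem.

Section StableEquilibrium.
Variables (R : realType) (k : nat) (W : 'M[R]_k) (mu : R).

Lemma util_repl (theta : 'cV[R]_k) i t :
  util W (repl theta i t) i = util W theta i + W i i * (t - theta i 0).
Proof.
rewrite /util (bigD1 i) //= [in RHS](bigD1 i) //= !mxE eqxx.
under eq_bigr => j /negbTE ji do rewrite mxE ji.
by rewrite addrAC -mulrDr subrKC.
Qed.

Lemma util_tight_of_stable (theta : 'cV[R]_k) i :
  W i i = 1 -> stable_eq W mu theta -> theta i 0 != 0 -> util W theta i = mu.
Proof.
move=> Wii1 [theta_ge0 [feas stable]] theta_i_neq0.
have theta_i_gt0 : 0 < theta i 0 by rewrite lt_def theta_i_neq0 theta_ge0.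
apply/eqP; rewrite eq_le feas andbT leNgt; apply/negP => mu_lt_util.
pose t := Num.max 0 (theta i 0 - (util W theta i - mu)).
have t_ge : theta i 0 - (util W theta i - mu) <= t by rewrite le_max lexx orbT.
apply: (stable i t); first by rewrite le_max lexx.
  by rewrite gt_max theta_i_gt0 /=; lra.
by rewrite util_repl Wii1 mul1r; lra.
Qed.

End StableEquilibrium.

Theorem lemma2 (R : realType) (k : nat) (W : 'M[R]_k) (mu : R)
  (W01 : forall i j, 0 <= W i j <= 1)
  (Wsym : W^T = W)
  (Wpsd : psd W)
  (Wdiag : forall i, W i i = 1)
  (mu_pos : 0 < mu)
  (theta : 'cV[R]_k)
  (Hopt : optimal_stable_eq W mu theta) :
  let J := [set i : 'I_k | theta i 0 != 0] in
  ((forall j, j \in J -> 0 <= theta j 0) /\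
   (forall j, j \in J -> mu <= \sum_(l in J) W j l * theta l 0)) /\
  (forall x : 'I_k -> R,
     (forall j, j \in J -> 0 <= x j) ->
     (forall j, j \in J -> mu <= \sum_(l in J) W j l * x l) ->
     \sum_(j in J) theta j 0 <= \sum_(j in J) x j).
Proof.
move=> J; have [stable _] := Hopt; have [theta_ge0 _] := stable.
have W_sym i l : W i l = W l i by rewrite -{1}Wsym mxE.
have tight j : j \in J -> \sum_(l in J) W j l * theta l 0 = mu.
  rewrite inE => theta_j_neq0.
  rewrite big_rmcond => [|l]; last by rewrite inE negbK => /eqP->; rewrite mulr0.
  rewrite -(util_tight_of_stable (Wdiag j) stable theta_j_neq0).
  by apply: eq_bigr => l _; rewrite W_sym.
split; first by split=> j jJ; rewrite ?tight.
by move=> x _; apply: sum_le_of_tight.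
Qed.
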